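(* Let $k\ge1$, $j\ge0$, $n=k+j$ and $N\in\mathcal{OC}_{k,j}$. Then $$\sum_{e\in \mathrm{ToT}(N)}A_C(N(e))=(2n+3)A_C(N)+(2n-1).$$
   Context: A (planted, binary) phylogenetic network on a taxon set $X$ with $|X|=n$ is a finite acyclic directed graph with: - a unique root $\rho$ of indegree 0 and outdegree 1; - exactly $n$ nodes of indegree 1 and outdegree 0 (leaves), labeled bijectively by $X$; - every other node is either a tree node (indegree 1, outdegree 2) or a reticulation node (indegree 2, outdegree 1). An edge $(p,q)$ is a tree edge if $q$ is a tree node or a leaf. A network is simplex if the child of every reticulation node is a leaf. A node $u$ is an ancestor of a node $v\neq u$ if some directed path from $\rho$ to $v$ passes through $u$. The ancestor number $\alpha_N(v)$ is the number of ancestors of $v$. The top tree component $C(N)$ of a simplex network $N$ is the set of tree nodes and leaves not descending from any reticulation node. Define $A_C(N)=\sum_{v\in C(N)}\alpha_N(v)$. $\mathrm{ToT}(N)$ is the set of tree edges $(u,v)$ of $N$ with $u$ not a reticulation node, i.e. the tree edges of the top tree component. For $k\ge1$, $j\ge0$, $\mathcal{OC}_{k,j}$ is the set of simplex networks on taxa $\{1,\dots,k+j\}$ with exactly $j$ reticulation nodes, whose children are the leaves $k+1,\dots,k+j$. For $N\in\mathcal{OC}_{k,j}$ and $e=(u,v)\in\mathrm{ToT}(N)$, the network $N(e)$ is obtained from $N$ as follows: - subdivide $e$ into the path $(u,p),(p,q),(q,v)$ with new nodes $p,q$; - add a new reticulation node $r$ with edges $(p,r),(q,r)$; - add a new leaf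 labeled $n+1$ with edge $(r,n+1)$. *)

From mathcomp Require Import all_boot.
Set Implicit Arguments. Unset Strict Implicit. Unset Printing Implicit Defensive.

(* A (candidate) network: nodes are 0 .. nn-1, root rt, directed edge list E,
   and a labelling lab (only meaningful on leaves). *)
Record net := Net { nn : nat; rt : nat; E : seq (nat * nat); lab : nat -> nat }.

Definition indeg (N : net) (v : nat) := count (fun e => e.2 == v) (E N).
Definition outdeg (N : net) (v : nat) := count (fun e => e.1 == v) (E N).
Definition is_leaf N v := (indeg N v == 1) && (outdeg N v == 0).
Definition is_tree N v := (indeg N v == 1) && (outdeg N v == 2).
Definition is_ret  N v := (indeg N v == 2) && (outdeg N v == 1).

Definition erel (N : net) : rel 'I_(nn N) := fun x y => (val x, val y) \in E N.

(* planted binary phylogenetic network on taxa {1,...,n} *)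
Definition is_network (N : net) (n : nat) : Prop :=
  [/\ [/\ rt N < nn N, uniq (E N),
      all (fun e => (e.1 < nn N) && (e.2 < nn N)) (E N) &
      indeg N (rt N) = 0 /\ outdeg N (rt N) = 1],
      (forall v, v < nn N -> v != rt N ->
         [|| is_leaf N v, is_tree N v | is_ret N v]),
      (forall x y : 'I_(nn N), erel x y -> ~~ connect (@erel N) y x) &
      [/\ (forall u v, u < nn N -> v < nn N -> is_leaf N u -> is_leaf N v ->
             lab N u = lab N v -> u = v),
          (forall v, v < nn N -> is_leaf N v -> 1 <= lab N v <= n) &
          (forall x, 1 <= x <= n -> exists v, [/\ v < nn N, is_leaf N v & lab N v = x])]].

Definition is_simplex (N : net) : Prop :=
  forall r c, is_ret N r -> (r, c) \in E N -> is_leaf N c.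

Definition OC (k j : nat) (N : net) : Prop :=
  [/\ is_network N (k + j), is_simplex N,
      count (is_ret N) (iota 0 (nn N)) = j &
      (forall r c, r < nn N -> is_ret N r -> (r, c) \in E N -> k < lab N c <= k + j)].

Definition anc (N : net) (u v : 'I_(nn N)) : bool :=
  [&& u != v, [exists x : 'I_(nn N), (val x == rt N) && connect (@erel N) x u]
    & connect (@erel N) u v].

Definition alpha (N : net) (v : 'I_(nn N)) : nat := #|[set u | anc u v]|.

Definition inC (N : net) (v : 'I_(nn N)) : bool :=
  (is_tree N v || is_leaf N v) && ~~ [exists r : 'I_(nn N), is_ret N r && anc r v].

Definition A_C (N : net) : nat := \sum_(v : 'I_(nn N) | inC v) alpha v.

Definition ToT (N : net) : seq (nat * nat) :=
  [seq e <- E N | (is_tree N e.2 || is_leaf N e.2) && ~~ is_ret N e.1].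

(* N(e), where n is the number of taxa of N; new nodes p = nn, q = nn+1,
   r = nn+2, new leaf nn+3 labelled n+1 *)
Definition extend (N : net) (n : nat) (e : nat * nat) : net :=
  let p := nn N in let q := (nn N).+1 in let r := (nn N).+2 in let l := (nn N).+3 in
  Net (nn N).+4 (rt N)
      ([:: (e.1, p); (p, q); (q, e.2); (p, r); (q, r); (r, l)] ++ rem e (E N))
      (fun x => if x == l then n.+1 else lab N x).

From mathcomp Require Import all_boot zify.
Set Implicit Arguments. Unset Strict Implicit. Unset Printing Implicit Defensive.

(* Inserting the path a -> p -> q -> b into a tree edge (a, b) of the top
   component puts p and q into C, with alpha(p) = alpha(b) and
   alpha(q) = alpha(b) + 1, raises alpha(v) by 2 exactly for the v in C below
   b, and leaves the new reticulation and its leaf outside C.  The edges of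
   ToT(N) correspond bijectively to their heads, which are the nodes of C, so
   summing over ToT(N) gives |ToT(N)| (A_C(N) + 1) + 2 S + 2 A_C(N), where S
   counts the pairs b <= v in C.  Since the nodes of C below-or-equal a node v
   of C are v and its ancestors other than the root, S = A_C(N) as well.
   Finally |ToT(N)| = L + T - R = 2n - 1 by the handshake identity
   L + T + 2R = 1 + 2T + R on leaves, tree nodes and reticulations. *)

Lemma connect_homo (T T' : finType) (e : rel T) (e' : rel T') (f : T -> T') :
  (forall x y, e x y -> connect e' (f x) (f y)) ->
  forall x y, connect e x y -> connect e' (f x) (f y).
Proof.
move=> fe x y /connectP [p]; elim: p x => [|z p IHp] x /=; first by move=> _ ->.
by case/andP=> exz pz ly; apply: connect_trans (fe _ _ exz) (IHp _ pz ly).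
Qed.

Lemma connect_stable (T : finType) (e : rel T) (S : pred T) :
  (forall x y, e x y -> S x -> S y) -> forall x y, connect e x y -> S x -> S y.
Proof.
move=> eS x y /connectP [p]; elim: p x => [|z p IHp] x /=; first by move=> _ ->.
by case/andP=> exz pz ly Sx; apply: IHp _ pz ly (eS _ _ exz Sx).
Qed.

Lemma connect_last_edge (T : finType) (e : rel T) x y :
  connect e x y -> x != y -> exists2 z, connect e x z & e z y.
Proof.
move=> /connectP [p]; elim/last_ind: p => [|p z _] /=; first by move=> _ ->; rewrite eqxx.
rewrite rcons_path last_rcons => /andP [px ez] -> _; exists (last x p) => //.
by apply/connectP; exists p.
Qed.

Lemma connect_first_edge (T : finType) (e : rel T) x y :
  connect e x y -> x != y -> exists2 z, e x z & connect e z y.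
Proof.
move=> /connectP [[|z p]] /=; first by move=> _ ->; rewrite eqxx.
by case/andP=> exz pz ly _; exists z => //; apply/connectP; exists p.
Qed.

Lemma count_eq1_inj (T : eqType) (a : pred T) (s : seq T) x y :
  count a s = 1 -> x \in s -> y \in s -> a x -> a y -> x = y.
Proof.
move=> c1 xs ys ax ay; apply/eqP/negPn/negP => nxy.
have ys' : y \in rem x s by rewrite (perm_mem (perm_to_rem xs)) inE eq_sym (negbTE nxy) in ys.
move: c1; rewrite (permP (perm_to_rem xs)) /= ax add1n => -[/eqP].
by rewrite -leqn0 leqNgt -has_count; case/negP; apply/hasP; exists y.
Qed.

Lemma sum_nat_of_bool (T : Type) (s : seq T) (b : pred T) :
  \sum_(x <- s) (b x : nat) = count b s.
Proof. by elim: s => [|x s IHs]; rewrite ?big_nil ?big_cons ?IHs. Qed.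

Lemma sum_nat_pick m x (h : nat -> nat) :
  x < m -> \sum_(0 <= w < m) (x == w) * h w = h x.
Proof.
move=> xm; rewrite (bigD1_seq x) ?mem_index_iota ?iota_uniq //= eqxx mul1n.
by rewrite big1 ?addn0 // => w; rewrite eq_sym => /negbTE ->.
Qed.

Lemma sum_boolD1 m x (b : pred nat) : x < m -> b x ->
  \sum_(0 <= w < m) (b w : nat) = \sum_(0 <= w < m) ((w != x) && b w) + 1.
Proof.
move=> xm bx; rewrite (bigD1_seq x) ?mem_index_iota ?iota_uniq //= bx addnC.
by rewrite big_mkcond; congr (_ + _); apply: eq_bigr => w _; case: (w != x).
Qed.

Lemma sum_seq_fibers (T : Type) (s : seq T) m (f : T -> nat) (P : pred T) h :
  all (fun x => f x < m) s ->
  \sum_(x <- s | P x) h (f x)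
    = \sum_(0 <= w < m) count (fun x => (f x == w) && P x) s * h w.
Proof.
elim: s => [|x s IHs] /=; first by rewrite big_nil big1 // => w _; rewrite mul0n.
case/andP=> xm /IHs IH; rewrite big_cons IH.
under [RHS]eq_bigr do rewrite mulnDl.
rewrite big_split /=; case: (P x).
  by rewrite -(sum_nat_pick h xm); congr (_ + _); apply: eq_bigr => w _; rewrite andbT.
by rewrite [X in _ = X + _]big1 ?add0n // => w _; rewrite andbF mul0n.
Qed.

(* Reachability between node numbers rather than ordinals, so that it can be
   compared between N and N(e), whose node types differ. *)
Definition reach (G : net) (x y : nat) : bool :=
  [exists i : 'I_(nn G), exists j : 'I_(nn G),
     [&& val i == x, val j == y & connect (@erel G) i j]].

Section Reach.
Variable G : net.

Lemma reachP x y : reflect (exists i j : 'I_(nn G),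
   [/\ val i = x, val j = y & connect (@erel G) i j]) (reach G x y).
Proof.
apply: (iffP existsP) => [[i /existsP [j /and3P [/eqP hi /eqP hj c]]]|[i [j [hi hj c]]]].
  by exists i, j.
by exists i; apply/existsP; exists j; rewrite hi hj !eqxx.
Qed.

Lemma reachE (i j : 'I_(nn G)) : reach G i j = connect (@erel G) i j.
Proof. by apply/reachP/idP => [[i' [j' [/val_inj -> /val_inj ->]]]|c] //; exists i, j. Qed.

Lemma reach_bound x y : reach G x y -> x < nn G /\ y < nn G.
Proof. by case/reachP=> i [j [<- <- _]]; rewrite !ltn_ord. Qed.

Lemma reach_refl x : x < nn G -> reach G x x.
Proof. by move=> xG; rewrite -[x]/(val (Ordinal xG)) reachE connect0. Qed.

Lemma reach_trans y x z : reach G x y -> reach G y z -> reach G x z.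
Proof.
case/reachP=> i [j [<- <- c1]] /reachP [j' [h [/val_inj e <- c2]]].
by rewrite reachE (connect_trans c1) // -e.
Qed.

Lemma reach_edge x y : (x, y) \in E G -> x < nn G -> y < nn G -> reach G x y.
Proof.
move=> xy xG yG; rewrite -[x]/(val (Ordinal xG)) -[y]/(val (Ordinal yG)) reachE.
exact: connect1.
Qed.

Lemma reach_stable (S : pred nat) : (forall x y, (x, y) \in E G -> S x -> S y) ->
  forall x y, reach G x y -> S x -> S y.
Proof.
move=> ES x y /reachP [i [j [<- <-]]].
by apply: (connect_stable (S := fun u : 'I_(nn G) => S (val u))) => u v /ES.
Qed.

Lemma reach_last_edge x y : reach G x y -> x != y ->
  exists z, reach G x z /\ (z, y) \in E G.
Proof.
case/reachP=> i [j [<- <- c]] ij; case: (connect_last_edge c ij) => z cz zj.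
by exists (val z); rewrite reachE.
Qed.

Lemma reach_first_edge x y : reach G x y -> x != y ->
  exists z, (x, z) \in E G /\ reach G z y.
Proof.
case/reachP=> i [j [<- <- c]] ij; case: (connect_first_edge c ij) => z iz zj.
by exists (val z); rewrite reachE.
Qed.

End Reach.

Lemma reach_homo (G G' : net) (f : nat -> nat) :
  (forall x, x < nn G -> f x < nn G') ->
  (forall x y, (x, y) \in E G -> x < nn G -> y < nn G -> reach G' (f x) (f y)) ->
  forall x y, reach G x y -> reach G' (f x) (f y).
Proof.
move=> fG fE x y /reachP [i [j [<- <- c]]].
pose F (u : 'I_(nn G)) : 'I_(nn G') := Ordinal (fG _ (ltn_ord u)).
rewrite -[f i]/(val (F i)) -[f j]/(val (F j)) reachE.
by apply: (connect_homo _ c) => u v uv; rewrite -reachE fE.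
Qed.

Definition rooted (G : net) := forall v, v < nn G -> reach G (rt G) v.

Definition is_treeleaf (G : net) v := is_tree G v || is_leaf G v.

Definition in_top (G : net) v := is_treeleaf G v &&
  ~~ has (fun r => [&& is_ret G r, r != v & reach G r v]) (iota 0 (nn G)).

Definition alpha_nat (G : net) v := \sum_(0 <= u < nn G) ((u != v) && reach G u v).

Definition top_below (G : net) w := \sum_(0 <= v < nn G) in_top G v * reach G w v.

Section AncestorCount.
Variable G : net.
Hypothesis rootedG : rooted G.

Lemma anc_reach (u v : 'I_(nn G)) : anc u v = (val u != val v) && reach G u v.
Proof.
rewrite /anc reachE -val_eqE; case: (connect _ u v); last by rewrite !andbF.
rewrite !andbT; case: (val u != val v) => //=; apply/existsP.
case/reachP: (rootedG (ltn_ord u)) => i [w [hi /val_inj wu c]].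
by exists i; rewrite hi eqxx -wu.
Qed.

Lemma alpha_natE (v : 'I_(nn G)) : alpha v = alpha_nat G v.
Proof.
rewrite /alpha /alpha_nat -sum1_card big_mkcond big_mkord; apply: eq_bigr => u _.
by rewrite inE anc_reach; case: (_ && _).
Qed.

Lemma inC_top (v : 'I_(nn G)) : inC v = in_top G v.
Proof.
rewrite /inC /in_top; congr (_ && ~~ _); apply/existsP/hasP => [[r /andP [hr]]|[r]].
  by rewrite anc_reach => rv; exists (val r); rewrite ?mem_iota //= hr.
rewrite mem_iota => /= rG /and3P [hr rv c].
by exists (Ordinal rG); rewrite hr anc_reach /= rv.
Qed.

Lemma A_C_sum : A_C G = \sum_(0 <= v < nn G) in_top G v * alpha_nat G v.
Proof.
rewrite /A_C big_mkcond big_mkord; apply: eq_bigr => v _.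
by rewrite inC_top alpha_natE; case: (in_top G v); rewrite ?mul1n.
Qed.

End AncestorCount.

Lemma outdeg_pos G x y : (x, y) \in E G -> 0 < outdeg G x.
Proof. by move=> xy; rewrite /outdeg -has_count; apply/hasP; exists (x, y). Qed.

Lemma indeg_pos G x y : (x, y) \in E G -> 0 < indeg G y.
Proof. by move=> xy; rewrite /indeg -has_count; apply/hasP; exists (x, y). Qed.

Lemma indeg_pos_edge G y : 0 < indeg G y -> exists x, (x, y) \in E G.
Proof. by rewrite /indeg -has_count => /hasP [[x y'] xy /= /eqP <-]; exists x. Qed.

Lemma node_kinds_disjoint G v : is_leaf G v + is_tree G v + is_ret G v <= 1.
Proof.
rewrite /is_leaf /is_tree /is_ret.
by case: (indeg G v) => [|[|[|i]]]; case: (outdeg G v) => [|[|[|o]]].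
Qed.

Lemma ret_treeleafF G v : is_ret G v -> is_treeleaf G v = false.
Proof.
move=> rv; move: (node_kinds_disjoint G v); rewrite rv /is_treeleaf.
by case: (is_leaf G v); case: (is_tree G v).
Qed.

Lemma treeleaf_retF G v : is_treeleaf G v -> is_ret G v = false.
Proof. by apply: contraTF => /ret_treeleafF ->. Qed.

Lemma treeleaf_indeg G v : is_treeleaf G v -> indeg G v = 1.
Proof. by rewrite /is_treeleaf /is_tree /is_leaf => /orP [] /andP [/eqP]. Qed.

Lemma has_ret_above G r v : r < nn G -> is_ret G r -> r != v -> reach G r v ->
  has (fun r => [&& is_ret G r, r != v & reach G r v]) (iota 0 (nn G)).
Proof. by move=> rG rr rv c; apply/hasP; exists r; rewrite ?mem_iota ?rr ?rv. Qed.

Section OCNetwork.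
Variables (k j : nat) (N : net).
Hypothesis HOC : OC k j N.

Lemma OC_network : is_network N (k + j). Proof. by case: HOC. Qed.

Lemma rt_bound : rt N < nn N. Proof. by case: OC_network => [[]]. Qed.

Lemma edges_uniq : uniq (E N). Proof. by case: OC_network => [[]]. Qed.

Lemma edge_bound x y : (x, y) \in E N -> x < nn N /\ y < nn N.
Proof. by case: OC_network => [[_ _ /allP EN _]] _ _ _ /EN /andP. Qed.

Lemma tails_bound : all (fun e => e.1 < nn N) (E N).
Proof. by apply/allP => -[x y] /edge_bound []. Qed.

Lemma heads_bound : all (fun e => e.2 < nn N) (E N).
Proof. by apply/allP => -[x y] /edge_bound []. Qed.

Lemma indeg_rt : indeg N (rt N) = 0. Proof. by case: OC_network => [[_ _ _ []]]. Qed.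

Lemma outdeg_rt : outdeg N (rt N) = 1. Proof. by case: OC_network => [[_ _ _ []]]. Qed.

Lemma node_kinds v : v < nn N -> v != rt N -> [|| is_leaf N v, is_tree N v | is_ret N v].
Proof. by case: OC_network => _ kinds _ _; apply: kinds. Qed.

Lemma edge_acyclic x y : (x, y) \in E N -> ~~ reach N y x.
Proof.
case: OC_network => _ _ acyc _ xy; case: (edge_bound xy) => xN yN.
by rewrite -[x]/(val (Ordinal xN)) -[y]/(val (Ordinal yN)) reachE; apply: acyc.
Qed.

Lemma ret_child_leaf r c : is_ret N r -> (r, c) \in E N -> is_leaf N c.
Proof. by case: HOC => _ simplex _ _; apply: simplex. Qed.

Lemma count_ret : count (is_ret N) (iota 0 (nn N)) = j.
Proof. by case: HOC. Qed.

Lemma indeg_gt0 v : v < nn N -> v != rt N -> 0 < indeg N v.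
Proof.
move=> vN vrt; move: (node_kinds vN vrt); rewrite /is_leaf /is_tree /is_ret.
by case: (indeg N v) => [|[|[|i]]] //=; rewrite !andFb.
Qed.

(* A node maximising the number of descendants among those reaching v has no
   parent, hence is the root. *)
Lemma OC_rooted : rooted N.
Proof.
move=> v0 vN; pose v := Ordinal vN.
pose D (x : 'I_(nn N)) := #|[set y | connect (@erel N) x y]|.
case: (@arg_maxnP _ v (fun x => connect (@erel N) x v) D (connect0 _ _)) => x0 x0v x0max.
suff <- : val x0 = rt N by rewrite -[v0]/(val v) reachE.
apply/eqP/negPn/negP => x0rt.
case: (indeg_pos_edge (indeg_gt0 (ltn_ord x0) x0rt)) => y yx0.
case: (edge_bound yx0) => yN _; pose y' := Ordinal yN.
have ey : erel y' x0 by [].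
have := x0max y' (connect_trans (connect1 ey) x0v).
rewrite /geq /= leqNgt => /negP; apply; apply: proper_card; apply/properP; split.
  by apply/subsetP => z; rewrite !inE; apply: connect_trans (connect1 ey).
exists y'; rewrite !inE ?connect0 //.
by move: (edge_acyclic yx0); rewrite -[y]/(val y') reachE.
Qed.

Lemma indeg_kinds v : v < nn N ->
  indeg N v = is_leaf N v + is_tree N v + 2 * is_ret N v.
Proof.
move=> vN; case: (eqVneq v (rt N)) => [->|vrt].
  by rewrite /is_leaf /is_tree /is_ret indeg_rt.
move: (node_kinds vN vrt) (node_kinds_disjoint N v); rewrite /is_leaf /is_tree /is_ret.
by case: (indeg N v) => [|[|[|i]]]; case: (outdeg N v) => [|[|[|o]]].
Qed.

Lemma outdeg_kinds v : v < nn N ->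
  outdeg N v = (rt N == v) + 2 * is_tree N v + is_ret N v.
Proof.
move=> vN; case: (eqVneq v (rt N)) => [->|vrt].
  by rewrite /is_tree /is_ret indeg_rt outdeg_rt.
move: (node_kinds vN vrt) (node_kinds_disjoint N v); rewrite /is_leaf /is_tree /is_ret.
by case: (indeg N v) => [|[|[|i]]]; case: (outdeg N v) => [|[|[|o]]].
Qed.

Lemma reach_from_ret r y : is_ret N r -> reach N r y -> r != y ->
  (r, y) \in E N /\ is_leaf N y.
Proof.
move=> rr ry ny; case: (reach_first_edge ry ny) => z [rz zy].
have lz := ret_child_leaf rr rz.
case: (eqVneq z y) => [<- //|nzy].
case: (reach_first_edge zy nzy) => w [zw _].
by move: lz (outdeg_pos zw); rewrite /is_leaf => /andP [_ /eqP ->].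
Qed.

Definition is_ToT_edge (e : nat * nat) := is_treeleaf N e.2 && ~~ is_ret N e.1.

(* A node of C has a single parent, which is not a reticulation; any other tree
   node or leaf lies below a reticulation, which is then its only parent. *)
Lemma count_ToT_head w : w < nn N ->
  count (fun e => (e.2 == w) && is_ToT_edge e) (E N) = in_top N w.
Proof.
move=> wN; rewrite /in_top; case tlw: (is_treeleaf N w) => /=; last first.
  apply/eqP; rewrite -leqn0 leqNgt -has_count; apply/hasPn => -[x y] _ /=.
  by rewrite /is_ToT_edge /=; case: (y =P w) => [->|]; rewrite ?tlw.
have w1 := treeleaf_indeg tlw.
case: hasP => [[r]|noret] /=.
  rewrite mem_iota => /andP [_ rN] /and3P [rr rw rwr].
  case: (reach_from_ret rr rwr rw) => rwE _.
  apply/eqP; rewrite -leqn0 leqNgt -has_count; apply/hasPn => -[x y] xy /=.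
  apply/negP => /andP [/eqP yw]; subst y.
  have [->] := count_eq1_inj w1 xy rwE (eqxx _) (eqxx _).
  by rewrite /is_ToT_edge /= rr andbF.
rewrite -w1 /indeg; apply: eq_in_count => -[x y] xy /=.
case: (y =P w) => [yw|] //=; subst y; rewrite /is_ToT_edge /= tlw /=.
apply/negP => rx; case: (edge_bound xy) => xN _.
have xw : x != w by apply: contraTneq tlw => <-; rewrite ret_treeleafF.
by apply: noret; exists x; rewrite ?mem_iota // rx xw (reach_edge xy).
Qed.

Lemma sum_ToT_head (h : nat -> nat) :
  \sum_(e <- ToT N) h e.2 = \sum_(0 <= w < nn N) in_top N w * h w.
Proof.
rewrite big_filter (sum_seq_fibers _ _ heads_bound).
by apply: eq_big_nat => w /andP [_ wN]; rewrite -(count_ToT_head wN).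
Qed.

Local Notation nodes_count P := (count P (iota 0 (nn N))).

Lemma leaves_count : nodes_count (is_leaf N) = k + j.
Proof.
case: OC_network => _ _ _ [lab_inj lab_range lab_onto].
set s := [seq v <- iota 0 (nn N) | is_leaf N v].
have sP v : v \in s = (v < nn N) && is_leaf N v by rewrite mem_filter mem_iota andbC.
have labs_uniq : uniq [seq lab N v | v <- s].
  rewrite map_inj_in_uniq ?filter_uniq ?iota_uniq // => u v.
  by rewrite !sP => /andP [uN lu] /andP [vN lv]; apply: lab_inj.
rewrite -size_filter -/s -(size_map (lab N)) -(size_iota 1 (k + j)).
apply/eqP; rewrite eqn_leq; apply/andP; split; apply: uniq_leq_size; rewrite ?iota_uniq //.
  move=> x /mapP [v]; rewrite sP => /andP [vN lv] ->.
  by rewrite mem_iota; move: (lab_range _ vN lv); lia.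
move=> x; rewrite mem_iota => x1n; case: (lab_onto x) => [|v [vN lv <-]]; first lia.
by apply: map_f; rewrite sP vN lv.
Qed.

Lemma sum_edges_head (h : nat -> nat) :
  \sum_(e <- E N) h e.2 = \sum_(0 <= w < nn N) indeg N w * h w.
Proof.
rewrite -[LHS](big_filter _ predT) filter_predT (sum_seq_fibers _ _ heads_bound).
by apply: eq_big_nat => w _; congr (_ * _); apply: eq_count => e; rewrite andbT.
Qed.

Lemma sum_edges_tail (h : nat -> nat) :
  \sum_(e <- E N) h e.1 = \sum_(0 <= w < nn N) outdeg N w * h w.
Proof.
rewrite -[LHS](big_filter _ predT) filter_predT (sum_seq_fibers _ _ tails_bound).
by apply: eq_big_nat => w _; congr (_ * _); apply: eq_count => e; rewrite andbT.
Qed.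

Lemma sum_nodes (b : pred nat) : \sum_(0 <= w < nn N) (b w : nat) = nodes_count b.
Proof. by rewrite /index_iota subn0 sum_nat_of_bool. Qed.

Lemma size_edges_by_head :
  size (E N) = nodes_count (is_leaf N) + nodes_count (is_tree N) + 2 * nodes_count (is_ret N).
Proof.
rewrite -sum1_size (sum_edges_head (fun _ => 1)) -!sum_nodes big_distrr -!big_split.
by apply: eq_big_nat => w /andP [_ wN]; rewrite muln1 indeg_kinds.
Qed.

Lemma size_edges_by_tail :
  size (E N) = 1 + 2 * nodes_count (is_tree N) + nodes_count (is_ret N).
Proof.
rewrite -sum1_size (sum_edges_tail (fun _ => 1)).
rewrite (eq_big_nat _ _ (F2 := fun w => (rt N == w) * 1 + 2 * is_tree N w + is_ret N w)).
  rewrite big_split [X in X + _ = _]big_split (sum_nat_pick (fun _ => 1) rt_bound).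
  by rewrite -!sum_nodes big_distrr.
by move=> w /andP [_ wN]; rewrite !muln1 outdeg_kinds.
Qed.

Lemma count_treeleaf_heads :
  count (fun e => is_treeleaf N e.2) (E N) = nodes_count (is_leaf N) + nodes_count (is_tree N).
Proof.
rewrite -sum_nat_of_bool (sum_edges_head (is_treeleaf N)) -!sum_nodes -big_split.
apply: eq_big_nat => w /andP [_ wN]; rewrite indeg_kinds // /is_treeleaf.
by move: (node_kinds_disjoint N w); case: (is_leaf N w); case: (is_tree N w); case: (is_ret N w).
Qed.

Lemma count_ret_tails : count (fun e => is_ret N e.1) (E N) = nodes_count (is_ret N).
Proof.
rewrite -sum_nat_of_bool (sum_edges_tail (is_ret N)) -sum_nodes.
apply: eq_big_nat => w /andP [_ wN]; rewrite outdeg_kinds //.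
case rw: (is_ret N w); last by rewrite muln0.
have -> : (rt N == w) = false by apply: contraTF rw => /eqP <-; rewrite /is_ret indeg_rt.
by move: (node_kinds_disjoint N w); rewrite rw; case: (is_leaf N w); case: (is_tree N w).
Qed.

Lemma size_ToT : size (ToT N) = 2 * (k + j) - 1.
Proof.
have ret_edges : count (fun e => is_treeleaf N e.2 && is_ret N e.1) (E N) = nodes_count (is_ret N).
  rewrite -count_ret_tails; apply: eq_in_count => -[x y] xy /=.
  by case rx: (is_ret N x); rewrite ?andbT ?andbF // /is_treeleaf (ret_child_leaf rx xy) orbT.
have := count_predC (fun e => is_ret N e.1) (filter (fun e => is_treeleaf N e.2) (E N)).
rewrite !count_filter size_filter count_treeleaf_heads.
have -> : count (predI (fun e => is_ret N e.1) (fun e => is_treeleaf N e.2)) (E N)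
    = nodes_count (is_ret N) by rewrite -ret_edges; apply: eq_count => e /=; rewrite andbC.
have -> : count (predI (predC (fun e => is_ret N e.1)) (fun e => is_treeleaf N e.2)) (E N)
    = size (ToT N) by rewrite size_filter; apply: eq_count => e /=; rewrite andbC.
by move: size_edges_by_head size_edges_by_tail count_ret leaves_count; lia.
Qed.

Lemma alpha_ToT_head a w : (a, w) \in ToT N ->
  \sum_(0 <= u < nn N) (reach N u a : nat) = alpha_nat N w.
Proof.
rewrite mem_filter => /andP [/andP [tlw _] aw].
have w1 := treeleaf_indeg tlw; case: (edge_bound aw) => aN wN.
apply: eq_big_nat => u _; congr nat_of_bool; apply/idP/andP => [ua|[uw]].
  split; last exact: reach_trans ua (reach_edge aw aN wN).
  by apply: contraTneq ua => ->; apply: edge_acyclic.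
case/reach_last_edge/(_ uw) => z [uz zw].
by have [<-] := count_eq1_inj w1 zw aw (eqxx _) (eqxx _).
Qed.

(* The nodes of C reaching a node v of C are v and its ancestors other than
   the root: an ancestor below a reticulation would put v below it too. *)
Lemma sum_top_reach v : v < nn N -> in_top N v ->
  \sum_(0 <= w < nn N) in_top N w * reach N w v = alpha_nat N v.
Proof.
move=> vN /andP [tlv noret].
have noret_above r : r < nn N -> is_ret N r -> reach N r v -> false.
  move=> rN rr rv; have nrv : r != v by apply: contraTneq tlv => <-; rewrite ret_treeleafF.
  by move: noret; rewrite (has_ret_above rN rr nrv rv).
rewrite (eq_big_nat _ _ (F2 := fun w => ((w != rt N) && reach N w v : nat))); last first.
  move=> w /andP [_ wN]; case wv: (reach N w v); rewrite ?muln0 ?andbF //= muln1.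
  case: (eqVneq w (rt N)) => [->|wrt] /=.
    by rewrite /in_top /is_treeleaf /is_tree /is_leaf indeg_rt.
  have tlw : is_treeleaf N w.
    move: (node_kinds wN wrt) (noret_above _ wN); rewrite /is_treeleaf wv.
    by case: (is_leaf N w); case: (is_tree N w); case: (is_ret N w) => // _ /(_ isT isT).
  rewrite /in_top tlw /= (_ : has _ _ = false) //; apply/hasP => -[r].
  rewrite mem_iota => /andP [_ rN].
  by case/and3P => rr _ rw; have := noret_above _ rN rr (reach_trans rw wv).
apply/eqP; rewrite -(eqn_add2r 1).
rewrite -(@sum_boolD1 _ _ (fun u => reach N u v) rt_bound (OC_rooted vN)).
by rewrite -(@sum_boolD1 _ _ (fun u => reach N u v) vN (reach_refl vN)).
Qed.

Lemma sum_top_below : \sum_(0 <= w < nn N) in_top N w * top_below N w = A_C N.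
Proof.
rewrite (A_C_sum OC_rooted) /top_below.
under eq_bigr do rewrite big_distrr /=.
rewrite exchange_big; apply: eq_big_nat => v /andP [_ vN].
case tv: (in_top N v); last by rewrite mul0n big1 // => w _; rewrite mul0n muln0.
rewrite mul1n -(sum_top_reach vN tv); by apply: eq_bigr => w _; rewrite mul1n.
Qed.

End OCNetwork.

Section Extension.
Variables (k j : nat) (N : net) (a b : nat).
Hypothesis HOC : OC k j N.
Hypothesis abToT : (a, b) \in ToT N.

Local Notation Ne := (extend N (k + j) (a, b)).
Local Notation p := (nn N).
Local Notation q := (nn N).+1.
Local Notation r := (nn N).+2.
Local Notation l := (nn N).+3.
Local Notation new_edges := [:: (a, p); (p, q); (q, b); (p, r); (q, r); (r, l)].

Lemma ab_edge : (a, b) \in E N. Proof. by move: abToT; rewrite mem_filter => /andP []. Qed.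

Lemma a_nret : ~~ is_ret N a.
Proof. by move: abToT; rewrite mem_filter => /andP [/andP []]. Qed.

Lemma a_bound : a < p. Proof. by case: (edge_bound HOC ab_edge). Qed.

Lemma b_bound : b < p. Proof. by case: (edge_bound HOC ab_edge). Qed.

Lemma edges_ext : E Ne = new_edges ++ rem (a, b) (E N). Proof. by []. Qed.

Lemma count_edges_rem (P : pred (nat * nat)) :
  count P (E N) = P (a, b) + count P (rem (a, b) (E N)).
Proof. by rewrite (permP (perm_to_rem ab_edge)). Qed.

Lemma degs_out_of_range x : p <= x -> indeg N x = 0 /\ outdeg N x = 0.
Proof.
move=> px; split; apply/eqP; rewrite -leqn0 leqNgt -has_count;
  apply/hasPn => -[u v] /(edge_bound HOC) [uN vN] /=; apply/eqP => e; subst; lia.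
Qed.

Lemma indeg_ext x : indeg Ne x =
  (p == x) + (q == x) + (b == x) + 2 * (r == x) + (l == x) + (indeg N x - (b == x)).
Proof. by rewrite /indeg /= (count_edges_rem (fun e => e.2 == x)) /=; lia. Qed.

Lemma outdeg_ext x : outdeg Ne x =
  (a == x) + 2 * (p == x) + 2 * (q == x) + (r == x) + (outdeg N x - (a == x)).
Proof. by rewrite /outdeg /= (count_edges_rem (fun e => e.1 == x)) /=; lia. Qed.

Lemma degs_ext_old x : x < p -> indeg Ne x = indeg N x /\ outdeg Ne x = outdeg N x.
Proof.
move=> xN; rewrite indeg_ext outdeg_ext; have := a_bound; have := b_bound; split.
  by have := indeg_pos ab_edge; case: (eqVneq b x) => [<-|] /=; lia.
by have := outdeg_pos ab_edge; case: (eqVneq a x) => [<-|] /=; lia.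
Qed.

Lemma kinds_ext_old x : x < p ->
  [/\ is_tree Ne x = is_tree N x, is_leaf Ne x = is_leaf N x & is_ret Ne x = is_ret N x].
Proof. by case/degs_ext_old => din dout; rewrite /is_tree /is_leaf /is_ret din dout. Qed.

Lemma kinds_ext_new :
  [/\ is_tree Ne p, is_tree Ne q, is_ret Ne r & is_leaf Ne l].
Proof.
have := a_bound; have := b_bound.
have [i0 o0] := degs_out_of_range (leqnn p); have [i1 o1] := degs_out_of_range (leqnSn p).
have [i2 o2] : indeg N r = 0 /\ outdeg N r = 0 by apply: degs_out_of_range; lia.
have [i3 o3] : indeg N l = 0 /\ outdeg N l = 0 by apply: degs_out_of_range; lia.
rewrite /is_tree /is_ret /is_leaf !indeg_ext !outdeg_ext i0 o0 i1 o1 i2 o2 i3 o3.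
by move=> *; split; rewrite ?eqxx; lia.
Qed.

Lemma edge_ext_ind (P : nat -> nat -> Prop) :
  P a p -> P p q -> P q b -> P p r -> P q r -> P r l ->
  (forall x y, (x, y) \in E N -> (x, y) != (a, b) -> P x y) ->
  forall x y, (x, y) \in E Ne -> P x y.
Proof.
move=> Pap Ppq Pqb Ppr Pqr Prl Pold x y; rewrite edges_ext mem_cat.
case/orP => [|]; last by rewrite (mem_rem_uniq _ (edges_uniq HOC)) inE => /andP [/Pold].
by rewrite !inE; do 5 (case/orP => [/eqP [-> ->] //|]); move/eqP => [-> ->].
Qed.

Lemma reach_ext_new_edge x y : (x, y) \in new_edges -> reach Ne x y.
Proof.
move: a_bound b_bound => aN bN xy.
apply: reach_edge; first by rewrite edges_ext mem_cat xy.
  by move: xy; rewrite !inE /=; do 5 (case/orP => [/eqP [-> _]|]; first lia); move/eqP => [-> _]; lia.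
by move: xy; rewrite !inE /=; do 5 (case/orP => [/eqP [_ ->]|]; first lia); move/eqP => [_ ->]; lia.
Qed.

Lemma reach_ext_ap : reach Ne a p. Proof. by apply: reach_ext_new_edge; rewrite !inE eqxx. Qed.
Lemma reach_ext_pq : reach Ne p q. Proof. by apply: reach_ext_new_edge; rewrite !inE eqxx ?orbT. Qed.
Lemma reach_ext_qb : reach Ne q b. Proof. by apply: reach_ext_new_edge; rewrite !inE eqxx ?orbT. Qed.
Lemma reach_ext_pr : reach Ne p r. Proof. by apply: reach_ext_new_edge; rewrite !inE eqxx ?orbT. Qed.
Lemma reach_ext_rl : reach Ne r l. Proof. by apply: reach_ext_new_edge; rewrite !inE eqxx ?orbT. Qed.

Lemma reach_ext_of_reach x y : reach N x y -> reach Ne x y.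
Proof.
move: a_bound b_bound => aN bN.
apply: (reach_homo (f := id)) => [z /= zN|x' y' xy x'N y'N]; first lia.
case: (eqVneq (x', y') (a, b)) => [[-> ->]|xy_ab] /=.
  exact: reach_trans reach_ext_ap (reach_trans reach_ext_pq reach_ext_qb).
apply: reach_edge; [|rewrite /=; lia|rewrite /=; lia].
by rewrite edges_ext mem_cat (mem_rem_uniq _ (edges_uniq HOC)) !inE /= xy_ab xy orbT.
Qed.

(* Collapsing the four new nodes onto a node z with a <= z <= b turns every
   edge of N(e) into a path of N. *)
Definition collapse (z x : nat) := if x < p then x else z.

Lemma reach_collapse z : reach N a z -> reach N z b ->
  forall x y, reach Ne x y -> reach N (collapse z x) (collapse z y).
Proof.
move=> az zb; move: a_bound b_bound => aN bN.
have zN : z < p by case: (reach_bound az).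
have [pN qN rN lN] : [/\ p < p = false, q < p = false, r < p = false & l < p = false].
  by split; apply/negbTE; rewrite -leqNgt; lia.
apply: reach_homo => [x _|]; first by rewrite /collapse; case: ifP.
apply: edge_ext_ind; rewrite /collapse ?pN ?qN ?rN ?lN ?aN ?bN //; last first.
  move=> x y xy _ _ _; case: (edge_bound HOC xy) => xN yN; rewrite xN yN.
  exact: reach_edge.
all: by move=> _ _; apply: reach_refl.
Qed.

Lemma collapse_old z x : x < p -> collapse z x = x.
Proof. by rewrite /collapse => ->. Qed.

Lemma collapse_new z x : p <= x -> collapse z x = z.
Proof. by rewrite /collapse ltnNge => ->. Qed.

Lemma reach_ab : reach N a b.
Proof. exact: reach_edge ab_edge a_bound b_bound. Qed.

Lemma reach_ext_old x y : x < p -> y < p -> reach Ne x y = reach N x y.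
Proof.
move=> xN yN; apply/idP/idP => [|/reach_ext_of_reach //].
by move/(reach_collapse (reach_refl a_bound) reach_ab); rewrite !collapse_old.
Qed.

Lemma reach_ext_to_p x : x < p -> reach Ne x p = reach N x a.
Proof.
move=> xN; apply/idP/idP => [|/reach_ext_of_reach xa]; last exact: reach_trans xa reach_ext_ap.
by move/(reach_collapse (reach_refl a_bound) reach_ab); rewrite collapse_old ?collapse_new.
Qed.

Lemma reach_ext_to_q x : x < p -> reach Ne x q = reach N x a.
Proof.
move=> xN; apply/idP/idP => [|/reach_ext_of_reach xa].
  by move/(reach_collapse (reach_refl a_bound) reach_ab); rewrite collapse_old ?collapse_new.
exact: reach_trans xa (reach_trans reach_ext_ap reach_ext_pq).
Qed.

Lemma reach_ext_from_p y : y < p -> reach Ne p y = reach N b y.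
Proof.
move=> yN; apply/idP/idP => [|/reach_ext_of_reach bR].
  by move/(reach_collapse reach_ab (reach_refl b_bound)); rewrite collapse_new ?collapse_old.
exact: reach_trans reach_ext_pq (reach_trans reach_ext_qb bR).
Qed.

Lemma reach_ext_from_q y : y < p -> reach Ne q y = reach N b y.
Proof.
move=> yN; apply/idP/idP => [|/reach_ext_of_reach bR]; last exact: reach_trans reach_ext_qb bR.
by move/(reach_collapse reach_ab (reach_refl b_bound)); rewrite collapse_new ?collapse_old.
Qed.

Lemma reach_ext_qpF : reach Ne q p = false.
Proof.
move: a_bound b_bound => aN bN; apply/negbTE/negP => qp.
have [z [qz zp]] := reach_last_edge qp (negbT (gtn_eqF (ltnSn p))).
have za : z = a.
  apply: (edge_ext_ind (P := fun x y => y = p -> x = a) _ _ _ _ _ _ _ zp erefl); try lia.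
  by move=> x y /(edge_bound HOC) [_ yN] _ yp; rewrite yp ltnn in yN.
by move: qz; rewrite za reach_ext_from_q ?a_bound // => ba; case/negP: (edge_acyclic HOC ab_edge).
Qed.

Lemma reach_ext_from_r x y : reach Ne x y -> r <= x -> r <= y.
Proof.
move: a_bound b_bound => aN bN; apply: reach_stable; apply: edge_ext_ind => //; try lia.
by move=> x' y' /(edge_bound HOC) [x'N _] _; lia.
Qed.

Lemma rooted_ext : rooted Ne.
Proof.
have rp : reach Ne (rt N) p by rewrite reach_ext_to_p ?(rt_bound HOC) ?(OC_rooted HOC a_bound).
move=> v /= vN; have [vp|pv] := ltnP v p.
  by apply: reach_ext_of_reach; apply: (OC_rooted HOC).
have : [|| v == p, v == q, v == r | v == l] by lia.
case/or4P => /eqP ->; first exact: rp.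
- exact: reach_trans rp reach_ext_pq.
- exact: reach_trans rp reach_ext_pr.
- exact: reach_trans rp (reach_trans reach_ext_pr reach_ext_rl).
Qed.

Lemma reach_ext_from_rF x y : r <= x -> y < r -> reach Ne x y = false.
Proof. by move=> rx yr; apply/negbTE/negP => /reach_ext_from_r/(_ rx); lia. Qed.

Lemma ret_ext_newF : [/\ is_ret Ne p = false, is_ret Ne q = false & is_ret Ne l = false].
Proof.
case: kinds_ext_new => tp tq _ ll.
by split; apply: treeleaf_retF; rewrite /is_treeleaf ?tp ?tq ?ll ?orbT.
Qed.

Lemma ret_reach_aF x : is_ret N x -> reach N x a = false.
Proof.
move=> rx; apply/negbTE/negP => xa.
have xna : x != a by apply: contraNneq a_nret => <-.
case: (reach_from_ret HOC rx xa xna) => _ /andP [_ /eqP a0].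
by move: (outdeg_pos ab_edge); rewrite a0.
Qed.

Lemma iota_ext : iota 0 (nn Ne) = iota 0 p ++ [:: p; q; r; l].
Proof. by rewrite -[nn Ne]/p.+4 -addn4 iotaD. Qed.

Lemma in_top_ext_old v : v < p -> in_top Ne v = in_top N v.
Proof.
move=> vN; have vr : v < r by lia.
rewrite /in_top iota_ext has_cat /=; have [-> -> ->] := ret_ext_newF.
case: kinds_ext_new => _ _ -> _; rewrite (reach_ext_from_rF (leqnn r) vr) !andbF /= orbF.
rewrite /is_treeleaf; case: (kinds_ext_old vN) => -> -> _; congr (_ && ~~ _).
apply: eq_in_has => w; rewrite mem_iota => /andP [_ wN].
by case: (kinds_ext_old wN) => _ _ ->; rewrite reach_ext_old.
Qed.

Lemma in_top_ext_pq : in_top Ne p /\ in_top Ne q.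
Proof.
have [rp rq rl] := ret_ext_newF; case: kinds_ext_new => tp tq rr _.
split; [move: (leqnSn p.+1) | move: (leqnn r)] => vr;
  rewrite /in_top iota_ext has_cat /= rp rq rl rr (reach_ext_from_rF (leqnn r) vr);
  rewrite !andbF /= orbF /is_treeleaf ?tp ?tq /=; apply/hasPn => w;
  rewrite mem_iota => /andP [_ wN]; case: (kinds_ext_old wN) => _ _ ->;
  rewrite ?reach_ext_to_p ?reach_ext_to_q //; apply/negP => /and3P [rw _];
  by rewrite ret_reach_aF.
Qed.

Lemma in_top_ext_rlF : in_top Ne r = false /\ in_top Ne l = false.
Proof.
case: kinds_ext_new => _ _ rr _; split; first by rewrite /in_top ret_treeleafF.
apply/negbTE; rewrite negb_and negbK; apply/orP; right.
by apply: (has_ret_above _ rr _ reach_ext_rl) => /=; lia.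
Qed.

Lemma sum_ext (F : nat -> nat) :
  \sum_(0 <= u < nn Ne) F u = \sum_(0 <= u < p) F u + F p + F q + F r + F l.
Proof. by rewrite !big_nat_recr. Qed.

Lemma alpha_ext_old v : v < p -> alpha_nat Ne v = alpha_nat N v + 2 * reach N b v.
Proof.
move=> vN; have vr : v < r by lia.
rewrite /alpha_nat sum_ext reach_ext_from_p // reach_ext_from_q //.
rewrite (reach_ext_from_rF (leqnn r) vr) (reach_ext_from_rF (leqnSn r) vr) !andbF !addn0.
rewrite (_ : p != v) 1?(_ : q != v) ?andTb; try lia.
rewrite -addnA addnn -mul2n; congr (_ + _).
by apply: eq_big_nat => u /andP [_ uN]; rewrite reach_ext_old.
Qed.

Lemma alpha_ext_p : alpha_nat Ne p = \sum_(0 <= u < p) (reach N u a : nat).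
Proof.
have pr : p < r by [].
rewrite /alpha_nat sum_ext eqxx reach_ext_qpF.
rewrite (reach_ext_from_rF (leqnn r) pr) (reach_ext_from_rF (leqnSn r) pr) !andbF !addn0.
by apply: eq_big_nat => u /andP [_ uN]; rewrite reach_ext_to_p // (_ : u != p) //; lia.
Qed.

Lemma alpha_ext_q : alpha_nat Ne q = \sum_(0 <= u < p) (reach N u a : nat) + 1.
Proof.
have qr : q < r by [].
rewrite /alpha_nat sum_ext eqxx reach_ext_pq.
rewrite (reach_ext_from_rF (leqnn r) qr) (reach_ext_from_rF (leqnSn r) qr) !andbF !addn0.
rewrite andbT neq_ltn ltnSn orTb; congr (_ + _).
by apply: eq_big_nat => u /andP [_ uN]; rewrite reach_ext_to_q // (_ : u != q) //; lia.
Qed.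

Lemma A_C_extend :
  A_C Ne = A_C N + 2 * top_below N b + 2 * alpha_nat N b + 1.
Proof.
rewrite (A_C_sum rooted_ext) (A_C_sum (OC_rooted HOC)) sum_ext.
case: in_top_ext_rlF => -> ->; case: in_top_ext_pq => -> ->.
rewrite alpha_ext_p alpha_ext_q (alpha_ToT_head HOC abToT) !mul0n !mul1n !addn0.
rewrite (eq_big_nat _ _ (F2 := fun v =>
  in_top N v * alpha_nat N v + 2 * (in_top N v * reach N b v))); last first.
  by move=> v /andP [_ vN]; rewrite in_top_ext_old ?alpha_ext_old // mulnDr mulnCA.
by rewrite big_split /top_below big_distrr /=; lia.
Qed.

End Extension.

Theorem mainTheorem6 (k j : nat) (N : net) :
  1 <= k -> OC k j N ->
  \sum_(e <- ToT N) A_C (extend N (k + j) e)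
    = (2 * (k + j) + 3) * A_C N + (2 * (k + j) - 1).
Proof.
move=> k_gt0 HOC.
rewrite (eq_big_seq (fun e => A_C N + 1 + 2 * top_below N e.2 + 2 * alpha_nat N e.2)).
  have sum_twice h : \sum_(e <- ToT N) 2 * h e.2 = 2 * \sum_(0 <= w < nn N) in_top N w * h w.
    by rewrite (sum_ToT_head HOC (fun w => 2 * h w)) big_distrr; apply: eq_bigr => w _; rewrite mulnCA.
  rewrite big_split big_split !sum_twice (sum_top_below HOC) -(A_C_sum (OC_rooted HOC)).
  by rewrite big_const_seq count_predT iter_addn_0 (size_ToT HOC) /=; nia.
by move=> [a b] ab; rewrite (A_C_extend HOC ab) /=; lia.
Qed.
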